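(* Let $A=(Q,R,F_A)$ be an RNNA, regarded as the coalgebra $c\colon Q\to\mathcal{P}_{\mathsf{ufs}}(1+\mathbb{A}\times Q+[\mathbb{A}]Q)$ with $c(q)=\{*:q\in F_A\}\cup\{(a,q'):q\xrightarrow{a}q'\}\cup\{\langle a\rangle q': q\xrightarrow{\mathord{|}a}q'\}$. Let $\mathsf{tr}_c\colon Q\to\mathcal{P}_{\mathsf{ufs}}(\overline{\mathbb{A}}^*/{=_\alpha})$ be the unique morphism in $\mathrm{Kl}(\mathcal{P}_{\mathsf{ufs}})$ from $(Q,c)$ to the terminal $\overline{F}$-coalgebra $(\overline{\mathbb{A}}^*/{=_\alpha},J\iota^{-1})$, i.e. the unique equivariant map with $J\iota^{-1}\bullet\mathsf{tr}_c=\overline{F}\mathsf{tr}_c\bullet c$. Then for every state $q\in Q$, $\mathsf{tr}_c(q)$ is the bar language accepted by $q$.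
   Context: Fix a countably infinite set $\mathbb{A}$ of names; $\mathsf{Nom}$ is the category of nominal sets and equivariant maps; $\mathrm{supp}(x)$ is the least finite support, $a\#x$ means $a\notin\mathrm{supp}(x)$. $[\mathbb{A}]X=(\mathbb{A}\times X)/\sim$ with $(a,x)\sim(b,y)$ iff $(a\,c)\cdot x=(b\,c)\cdot y$ for fresh $c$; classes $\langle a\rangle x$. $\mathcal{P}_{\mathsf{ufs}}X$ is the set of uniformly finitely supported subsets ($\bigcup_{x\in A}\mathrm{supp}(x)$ finite), a monad with unit $x\mapsto\{x\}$ and multiplication union; $\mathrm{Kl}(\mathcal{P}_{\mathsf{ufs}})$ has equivariant maps $X\to\mathcal{P}_{\mathsf{ufs}}Y$ as morphisms, composed by $g\bullet f(x)=\bigcup_{y\in f(x)}g(y)$, and $Jf(x)=\{f(x)\}$. $FX=1+\mathbb{A}\times X+[\mathbb{A}]X$ with $1=\{*\}$, and $\overline{F}$ its canonical extension: for $f\colon X\to\mathcal{P}_{\mathsf{ufs}}Y$, $\overline{F}f( * )=\{*\}$, $\overline{F}f(a,x)=\{(a,y):y\in f(x)\}$, $\overline{F}f(\langle a\rangle x)=\{\langle a\rangle y: y\in f(x)\}$. Bar strings are words over $\overline{\mathbb{A}}=\mathbb{A}\cup\{\mathord{|}a:a\in\mathbb{A}\}$; $=_\alpha$ is the least equivalence with $x\,\mathord{|}a\,v=_\alpha x\,\mathord{|}b\,w$ whenever $\langle a\rangle v=\langle b\rangle w$ (i.e. $a=b,v=w$, or $b\#v$ and $(a\,b)\cdot v=w$);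 $[w]_\alpha$ its classes. $\iota( * )=[\varepsilon]_\alpha$, $\iota(a,[w]_\alpha)=[aw]_\alpha$, $\iota(\langle a\rangle[w]_\alpha)=[\mathord{|}a\,w]_\alpha$ is the initial $F$-algebra, and $(\overline{\mathbb{A}}^*/{=_\alpha},J\iota^{-1})$ is the terminal $\overline{F}$-coalgebra. An RNNA $(Q,R,F_A)$ consists of an orbit-finite nominal set $Q$, an equivariant relation $R\subseteq Q\times\overline{\mathbb{A}}\times Q$ (write $q\xrightarrow{\sigma}q'$) and an equivariant set $F_A\subseteq Q$ of final states, such that (a) if $q\xrightarrow{\mathord{|}a}q'$ and $\langle a\rangle q'=\langle b\rangle q''$ then $q\xrightarrow{\mathord{|}b}q''$, and (b) for each $q$ the sets $\{(a,q'):q\xrightarrow{a}q'\}$ and $\{\langle a\rangle q':q\xrightarrow{\mathord{|}a}q'\}$ are finite. $q$ accepts $w=\sigma_1\cdots\sigma_n\in\overline{\mathbb{A}}^*$ if there is a run $q\xrightarrow{\sigma_1}q_1\cdots\xrightarrow{\sigma_n}q_n$ with $q_n$ final; the bar language accepted by $q$ is $\{[w]_\alpha: q\text{ accepts }w\}$. *)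

From Stdlib Require Import List Arith Lia Relations ClassicalEpsilon.
Import ListNotations.
Set Implicit Arguments.

Definition atom := nat.

Record perm := Perm {
  pf : atom -> atom;
  pg : atom -> atom;
  pgf : forall a, pg (pf a) = a;
  pfg : forall a, pf (pg a) = a;
  pfin : exists l : list atom, forall a, ~ In a l -> pf a = a }.

Definition pid : perm.
Proof.
  refine (@Perm (fun a => a) (fun a => a) (fun a => eq_refl) (fun a => eq_refl) _).
  exists nil; auto.
Defined.

Definition pcomp (p q : perm) : perm.
Proof.
  refine (@Perm (fun a => pf p (pf q a)) (fun a => pg q (pg p a)) _ _ _).
  - intro a; rewrite pgf, pgf; reflexivity.
  - intro a; rewrite pfg, pfg; reflexivity.
  - destruct (pfin p) as [lp Hp], (pfin q) as [lq Hq].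
    exists (lp ++ lq); intros a Ha.
    rewrite Hq, Hp; auto; intro; apply Ha; apply in_or_app; auto.
Defined.

Definition swap_fun (a b x : atom) : atom :=
  if Nat.eqb x a then b else if Nat.eqb x b then a else x.

Lemma swap_fun_invol a b x : swap_fun a b (swap_fun a b x) = x.
Proof.
  unfold swap_fun.
  destruct (Nat.eqb_spec x a) as [->|Hxa].
  - destruct (Nat.eqb_spec b a) as [->|Hba]; [reflexivity|].
    destruct (Nat.eqb_spec b b); [reflexivity|lia].
  - destruct (Nat.eqb_spec x b) as [->|Hxb].
    + destruct (Nat.eqb_spec a a); [reflexivity|lia].
    + destruct (Nat.eqb_spec x a); [lia|]. destruct (Nat.eqb_spec x b); [lia|reflexivity].
Qed.

Definition pswap (a b : atom) : perm.
Proof.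
  refine (@Perm (swap_fun a b) (swap_fun a b) (swap_fun_invol a b) (swap_fun_invol a b) _).
  exists [a; b]; intros x Hx; unfold swap_fun.
  destruct (Nat.eqb_spec x a); [subst; simpl in Hx; tauto|].
  destruct (Nat.eqb_spec x b); [subst; simpl in Hx; tauto|reflexivity].
Defined.

Section Nominal.
Variable X : Type.
Variable act : perm -> X -> X.

Definition supports (l : list atom) (x : X) : Prop :=
  forall p, (forall a, In a l -> pf p a = a) -> act p x = x.

Definition supp (x : X) (a : atom) : Prop := forall l, supports l x -> In a l.

Definition fresh (a : atom) (x : X) : Prop := ~ supp x a.

Definition is_nominal : Prop :=
  (forall x, act pid x = x) /\
  (forall p q x, act p (act q x) = act (pcomp p q) x) /\
  (forall x, exists l, supports l x).

Definition orbit_finite : Prop :=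
  exists l : list X, forall x, exists x0 p, In x0 l /\ x = act p x0.

Definition pset_act (p : perm) (S : X -> Prop) : X -> Prop :=
  fun y => exists y', S y' /\ y = act p y'.

Definition ufs (S : X -> Prop) : Prop :=
  exists l : list atom, forall y, S y -> forall a, supp y a -> In a l.

Definition abs_rel (u v : atom * X) : Prop :=
  let (a, x) := u in let (b, y) := v in
  exists c, c <> a /\ c <> b /\ fresh c x /\ fresh c y /\
            act (pswap a c) x = act (pswap b c) y.
End Nominal.

Definition quot (T : Type) (Rl : T -> T -> Prop) : Type :=
  { P : T -> Prop | exists t, P = Rl t }.

Definition cls {T : Type} (Rl : T -> T -> Prop) (t : T) : quot Rl :=
  exist _ (Rl t) (ex_intro _ t eq_refl).

Definition rep {T : Type} {Rl : T -> T -> Prop} (q : quot Rl) : T :=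
  proj1_sig (constructive_indefinite_description _ (proj2_sig q)).

Definition Abs (X : Type) (act : perm -> X -> X) : Type := quot (abs_rel act).
Definition abs {X : Type} (act : perm -> X -> X) (a : atom) (x : X) : Abs act :=
  cls (abs_rel act) (a, x).

Inductive FX (X : Type) (act : perm -> X -> X) : Type :=
| FStar : FX act
| FPair : atom -> X -> FX act
| FAbs  : Abs act -> FX act.
Arguments FStar {X act}.
Arguments FPair {X act} _ _.
Arguments FAbs {X act} _.

(* ---------- Kleisli category of P_ufs (morphisms as relations X -> P Y) ---------- *)
Definition kcomp {X Y Z : Type} (g : Y -> Z -> Prop) (f : X -> Y -> Prop) : X -> Z -> Prop :=
  fun x z => exists y, f x y /\ g y z.

Definition J {X Y : Type} (f : X -> Y) : X -> Y -> Prop := fun x y => y = f x.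

Definition kl_morphism {X Y : Type} (actX : perm -> X -> X) (actY : perm -> Y -> Y)
  (f : X -> Y -> Prop) : Prop :=
  (forall p x, f (actX p x) = pset_act actY p (f x)) /\ (forall x, ufs actY (f x)).

Definition Fbar {X Y : Type} {actX : perm -> X -> X} {actY : perm -> Y -> Y}
  (f : X -> Y -> Prop) (u : FX actX) : FX actY -> Prop :=
  match u with
  | FStar => fun z => z = FStar
  | FPair a x => fun z => exists y, f x y /\ z = FPair a y
  | FAbs t => let (a, x) := rep t in
              fun z => exists y, f x y /\ z = FAbs (abs actY a y)
  end.

Inductive bar : Type := Plain (a : atom) | Bind (a : atom).
Definition bar_act (p : perm) (s : bar) : bar :=
  match s with Plain a => Plain (pf p a) | Bind a => Bind (pf p a) end.
Definition bstr := list bar.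
Definition w_act (p : perm) (w : bstr) : bstr := map (bar_act p) w.

Definition alpha_step (u1 u2 : bstr) : Prop :=
  exists x a v b w, u1 = x ++ Bind a :: v /\ u2 = x ++ Bind b :: w /\
                    abs w_act a v = abs w_act b w.

Definition alpha_eq : bstr -> bstr -> Prop := clos_refl_sym_trans bstr alpha_step.

Definition Lang : Type := quot alpha_eq.
Definition lang_act (p : perm) (l : Lang) : Lang := cls alpha_eq (w_act p (rep l)).

Definition iota (u : FX lang_act) : Lang :=
  match u with
  | FStar => cls alpha_eq nil
  | FPair a l => cls alpha_eq (Plain a :: rep l)
  | FAbs t => let (a, l) := rep t in cls alpha_eq (Bind a :: rep l)
  end.

Definition iota_inv (l : Lang) : FX lang_act :=
  match rep l with
  | nil => FStar
  | Plain a :: w => FPair a (cls alpha_eq w)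
  | Bind a :: w => FAbs (abs lang_act a (cls alpha_eq w))
  end.

Record RNNA := {
  st : Type;
  st_act : perm -> st -> st;
  trans : st -> bar -> st -> Prop;
  final : st -> Prop;
  st_nominal : is_nominal st_act;
  st_orbit_finite : orbit_finite st_act;
  trans_equiv : forall p q s q', trans q s q' ->
      trans (st_act p q) (bar_act p s) (st_act p q');
  final_equiv : forall p q, final q -> final (st_act p q);
  trans_alpha : forall q a q' b q'', trans q (Bind a) q' ->
      abs st_act a q' = abs st_act b q'' -> trans q (Bind b) q'';
  trans_fin_free : forall q, exists l : list (atom * st),
      forall a q', trans q (Plain a) q' -> In (a, q') l;
  trans_fin_bound : forall q, exists l : list (Abs st_act),
      forall a q', trans q (Bind a) q' -> In (abs st_act a q') l }.

Definition rnna_coalg (A : RNNA) (q : st A) : FX (st_act A) -> Prop :=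
  fun z => (z = FStar /\ final A q) \/
           (exists a q', trans A q (Plain a) q' /\ z = FPair a q') \/
           (exists a q', trans A q (Bind a) q' /\ z = FAbs (abs (st_act A) a q')).

Fixpoint accepts (A : RNNA) (q : st A) (w : bstr) : Prop :=
  match w with
  | nil => final A q
  | s :: w' => exists q', trans A q s q' /\ accepts A q' w'
  end.

Definition bar_language (A : RNNA) (q : st A) : Lang -> Prop :=
  fun l => exists w, accepts A q w /\ l = cls alpha_eq w.

(* Alpha-equivalence of bar strings is decided by their de Bruijn form, which
   makes [Lang] and its name abstractions concrete.  The coalgebra equation for
   [tr] peels off one letter of a word at a time, so by induction on word length
   [tr q] consists exactly of the classes of the words accepted by [q].  The only
   nominal ingredient is the binder case, where [Fbar] uses an arbitrary
   representative <b>q'' of <a>q': the free names of a word accepted by q' lie in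
   supp(q') (a consequence of the finite branching of RNNAs), so the word can be
   renamed along that representative. *)

From Stdlib Require Import List Arith Lia Relations Wf_nat Decidable.
From Stdlib Require Import ClassicalEpsilon FunctionalExtensionality PropExtensionality ProofIrrelevance.
Import ListNotations.

Ltac split_notin :=
  repeat match goal with
  | H : ~ In _ (_ :: _) |- _ => apply not_in_cons in H as [? ?]
  | H : ~ In _ (_ ++ _) |- _ => rewrite in_app_iff in H; apply not_or in H as [? ?]
  end.

Lemma fresh_atom (l : list atom) : exists d, ~ In d l.
Proof.
  exists (S (list_max l)); intros Hin.
  assert (Hle : Forall (fun k => k <= list_max l) l) by (apply list_max_le; lia).
  rewrite Forall_forall in Hle; specialize (Hle _ Hin); lia.
Qed.

Lemma perm_ext (p q : perm) :
  (forall a, pf p a = pf q a) -> (forall a, pg p a = pg q a) -> p = q.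
Proof.
  destruct p as [f1 g1 h1 k1 m1], q as [f2 g2 h2 k2 m2]; simpl; intros Hf Hg.
  assert (f1 = f2) by (apply functional_extensionality; auto).
  assert (g1 = g2) by (apply functional_extensionality; auto).
  subst f2 g2.
  rewrite (proof_irrelevance _ h1 h2), (proof_irrelevance _ k1 k2), (proof_irrelevance _ m1 m2).
  reflexivity.
Qed.

Definition pinv (p : perm) : perm.
Proof.
  refine (@Perm (pg p) (pf p) (pfg p) (pgf p) _).
  destruct (pfin p) as [l Hl]; exists l; intros a Ha.
  rewrite <- (Hl a Ha) at 1; apply pgf.
Defined.

Lemma pf_inj (p : perm) x y : pf p x = pf p y -> x = y.
Proof. intros E; rewrite <- (pgf p x), <- (pgf p y), E; reflexivity. Qed.

Lemma swap_fun_l a b : swap_fun a b a = b.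
Proof. unfold swap_fun; rewrite Nat.eqb_refl; reflexivity. Qed.

Lemma swap_fun_r a b : swap_fun a b b = a.
Proof.
  unfold swap_fun; destruct (Nat.eqb_spec b a); [congruence|].
  rewrite Nat.eqb_refl; reflexivity.
Qed.

Lemma swap_fun_other a b x : x <> a -> x <> b -> swap_fun a b x = x.
Proof.
  intros; unfold swap_fun.
  destruct (Nat.eqb_spec x a), (Nat.eqb_spec x b); congruence.
Qed.

Lemma swap_fun_trans a c d x :
  x <> c -> x <> d -> swap_fun c d (swap_fun a c x) = swap_fun a d x.
Proof.
  intros; unfold swap_fun.
  destruct (Nat.eqb_spec x a), (Nat.eqb_spec x c);
  repeat match goal with |- context [Nat.eqb ?x ?y] => destruct (Nat.eqb_spec x y) end; lia.
Qed.

Section Nominal.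
Context {X : Type} {act : perm -> X -> X}.

Lemma fresh_of_supports l x c : supports act l x -> ~ In c l -> fresh act c x.
Proof. intros Hl Hc Hs; apply Hc, Hs, Hl. Qed.

Lemma supp_of_swap_moves (M : list atom) x a :
  (forall d, ~ In d M -> d <> a -> act (pswap a d) x <> x) -> supp act x a.
Proof.
  intros Hmove l Hl; destruct (in_dec Nat.eq_dec a l) as [|Ha]; [assumption|exfalso].
  destruct (fresh_atom (a :: l ++ M)) as [d Hd]; split_notin.
  apply (Hmove d); auto.
  apply Hl; intros y Hy; simpl; apply swap_fun_other; intros ->; contradiction.
Qed.

Lemma abs_rel_sym u v : abs_rel act u v -> abs_rel act v u.
Proof.
  destruct u as [a x], v as [b y]; intros (c & Hca & Hcb & Hcx & Hcy & E).
  exists c; auto.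
Qed.

Lemma abs_rel_refl a x : (exists l, supports act l x) -> abs_rel act (a, x) (a, x).
Proof.
  intros [l Hl]; destruct (fresh_atom (a :: l)) as [d Hd]; split_notin.
  exists d; repeat split; auto; eapply fresh_of_supports; eauto.
Qed.

Lemma abs_eq_rel a x b y :
  (exists l, supports act l x) -> abs act a x = abs act b y -> abs_rel act (a, x) (b, y).
Proof.
  intros Hx E; apply abs_rel_sym.
  apply (f_equal (@proj1_sig _ _)) in E; simpl in E.
  rewrite <- E; apply abs_rel_refl, Hx.
Qed.

Hypothesis act_nominal : is_nominal act.

Lemma act_pinv p x : act (pinv p) (act p x) = x.
Proof.
  destruct act_nominal as [Hid [Hcomp _]].
  rewrite Hcomp; replace (pcomp (pinv p) p) with pid; [apply Hid|].
  apply perm_ext; simpl; intros; symmetry; apply pgf.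
Qed.

Lemma act_swap_invol a b x : act (pswap a b) (act (pswap a b) x) = x.
Proof.
  destruct act_nominal as [Hid [Hcomp _]].
  rewrite Hcomp; replace (pcomp (pswap a b) (pswap a b)) with pid; [apply Hid|].
  apply perm_ext; simpl; intros; symmetry; apply swap_fun_invol.
Qed.

Lemma supp_act p x a : supp act x a -> supp act (act p x) (pf p a).
Proof.
  intros Ha l Hl.
  assert (Hsupp : supports act (map (pg p) l) x).
  { intros r Hr; destruct act_nominal as [_ [Hcomp _]].
    set (r' := pcomp p (pcomp r (pinv p))).
    assert (Hr' : act r' (act p x) = act p x).
    { apply Hl; intros z Hz; unfold r'; simpl.
      rewrite Hr; [apply pfg | apply in_map; exact Hz]. }
    rewrite Hcomp in Hr'.
    replace (pcomp r' p) with (pcomp p r) in Hr'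
      by (apply perm_ext; unfold r'; simpl; intros; rewrite ?pgf; reflexivity).
    rewrite <- Hcomp in Hr'.
    rewrite <- (act_pinv p (act r x)), Hr', act_pinv; reflexivity. }
  apply Ha, in_map_iff in Hsupp as [z [<- Hz]].
  rewrite pfg; exact Hz.
Qed.

Lemma supp_swap a d x : supp act x a -> supp act (act (pswap a d) x) d.
Proof.
  intros Ha; pose proof (supp_act (pswap a d) x a Ha) as H; simpl in H.
  rewrite swap_fun_l in H; exact H.
Qed.

Lemma supp_list_bound (S : list X) :
  exists M, forall y, In y S -> forall x, supp act y x -> In x M.
Proof.
  induction S as [|y S [M HM]]; [exists []; simpl; tauto|].
  destruct (proj2 (proj2 act_nominal) y) as [l Hl].
  exists (l ++ M); intros z [<-|Hz] x Hx; apply in_app_iff; [left; apply Hx, Hl | right; eauto].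
Qed.

Lemma supp_abs_eq a y b z x :
  abs act a y = abs act b z -> supp act y x -> x <> a -> supp act z x /\ x <> b.
Proof.
  intros E Hx Hxa.
  destruct (abs_eq_rel _ _ _ _ (proj2 (proj2 act_nominal) y) E) as (e & Hea & Heb & Hey & Hez & Hswap).
  assert (Hxe : x <> e) by (intros ->; contradiction).
  pose proof (supp_act (pswap b e) _ _ (supp_act (pswap a e) _ _ Hx)) as Hs; simpl in Hs.
  rewrite Hswap, act_swap_invol, (swap_fun_other _ _ _ Hxa Hxe) in Hs.
  destruct (Nat.eq_dec x b) as [->|Hxb].
  - rewrite swap_fun_l in Hs; contradiction.
  - rewrite swap_fun_other in Hs by assumption; auto.
Qed.

End Nominal.

Lemma quot_eq {T} {R : T -> T -> Prop} (t1 t2 : quot R) : proj1_sig t1 = proj1_sig t2 -> t1 = t2.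
Proof. destruct t1, t2; simpl; intros; subst; f_equal; apply proof_irrelevance. Qed.

Lemma rep_spec {T} {R : T -> T -> Prop} (t : quot R) : proj1_sig t = R (rep t).
Proof. unfold rep; destruct (constructive_indefinite_description _ _); assumption. Qed.

Lemma cls_rep {T} {R : T -> T -> Prop} (t : quot R) : t = cls R (rep t).
Proof. apply quot_eq; exact (rep_spec t). Qed.

Lemma rep_cls_rel {T} {R : T -> T -> Prop} t : R t t -> R (rep (cls R t)) t.
Proof. pose proof (rep_spec (cls R t)) as E; simpl in E; rewrite <- E; auto. Qed.

Lemma cls_eq_of_rel {T} {R : T -> T -> Prop} t1 t2 :
  equivalence T R -> R t1 t2 -> cls R t1 = cls R t2.
Proof.
  intros [_ Htrans Hsym] H; apply quot_eq; simpl.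
  apply functional_extensionality; intros t; apply propositional_extensionality.
  split; [apply Htrans, Hsym | apply Htrans]; assumption.
Qed.

Lemma abs_rep {X} {act : perm -> X -> X} (t : Abs act) b y : rep t = (b, y) -> t = abs act b y.
Proof. intros E; rewrite (cls_rep t), E; reflexivity. Qed.

(** * Bar strings and alpha-equivalence *)

Definition atoms (u : bstr) : list atom :=
  map (fun s => match s with Plain a | Bind a => a end) u.

Lemma atoms_w_act p u : atoms (w_act p u) = map (pf p) (atoms u).
Proof. induction u as [|[a|a] u IH]; simpl; f_equal; assumption. Qed.

Lemma w_act_comp p q u : w_act p (w_act q u) = w_act (pcomp p q) u.
Proof. induction u as [|[a|a] u IH]; simpl; f_equal; assumption. Qed.

Lemma w_act_ext p q u :
  (forall x, In x (atoms u) -> pf p x = pf q x) -> w_act p u = w_act q u.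
Proof. induction u as [|[a|a] u IH]; simpl; intros H; f_equal; auto. Qed.

Lemma supports_atoms u : supports w_act (atoms u) u.
Proof. induction u as [|[a|a] u IH]; intros p Hp; simpl in *; f_equal; auto. Qed.

Lemma fresh_bstr c u : fresh w_act c u -> ~ In c (atoms u).
Proof.
  intros Hc Hin; apply Hc, (supp_of_swap_moves (atoms u)); intros d Hd _ E.
  apply Hd; rewrite <- E, atoms_w_act, in_map_iff.
  exists c; split; [apply swap_fun_l | exact Hin].
Qed.

Lemma abs_rel_bstr_any a u b w :
  abs_rel w_act (a, u) (b, w) ->
  forall d, d <> a -> d <> b -> ~ In d (atoms u) -> ~ In d (atoms w) ->
  w_act (pswap a d) u = w_act (pswap b d) w.
Proof.
  intros (c & Hca & Hcb & Hcu & Hcw & E) d Hda Hdb Hdu Hdw.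
  apply fresh_bstr in Hcu, Hcw.
  transitivity (w_act (pswap c d) (w_act (pswap a c) u)); [|rewrite E];
    rewrite w_act_comp; apply w_act_ext; intros x Hx; simpl; [symmetry|];
    apply swap_fun_trans; intros ->; contradiction.
Qed.

Lemma abs_rel_bstr_trans a u b v c w :
  abs_rel w_act (a, u) (b, v) -> abs_rel w_act (b, v) (c, w) -> abs_rel w_act (a, u) (c, w).
Proof.
  intros H1 H2.
  destruct (fresh_atom (a :: b :: c :: atoms u ++ atoms v ++ atoms w)) as [d Hd]; split_notin.
  exists d; repeat split; try assumption; try (apply (fresh_of_supports _ _ _ (supports_atoms _)); assumption).
  rewrite (abs_rel_bstr_any _ _ _ _ H1 d), (abs_rel_bstr_any _ _ _ _ H2 d); first [reflexivity | assumption].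
Qed.

Lemma abs_bstr_eq_of_rel a u b w : abs_rel w_act (a, u) (b, w) -> abs w_act a u = abs w_act b w.
Proof.
  intros H; apply quot_eq; simpl.
  apply functional_extensionality; intros [c v]; apply propositional_extensionality.
  split; intros; eapply abs_rel_bstr_trans; eauto using abs_rel_sym.
Qed.

Lemma alpha_eq_cons s u v : alpha_eq u v -> alpha_eq (s :: u) (s :: v).
Proof.
  induction 1 as [u v (x & a & v' & b & w & -> & -> & E)| | |].
  - apply rst_step; exists (s :: x), a, v', b, w; auto.
  - apply rst_refl.
  - apply rst_sym; assumption.
  - eapply rst_trans; eassumption.
Qed.

Lemma alpha_bind_rename a c u :
  ~ In c (atoms u) -> alpha_eq (Bind a :: u) (Bind c :: w_act (pswap a c) u).
Proof.
  intros Hc; apply rst_step; exists [], a, u, c, (w_act (pswap a c) u); repeat split.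
  apply abs_bstr_eq_of_rel.
  destruct (fresh_atom (a :: c :: atoms u)) as [d Hd]; split_notin.
  exists d; repeat split; try assumption; try apply (fresh_of_supports _ _ _ (supports_atoms _)).
  - assumption.
  - rewrite atoms_w_act, in_map_iff; intros [y [Hy Hyu]]; simpl in Hy.
    apply (f_equal (swap_fun a c)) in Hy.
    rewrite swap_fun_invol, swap_fun_other in Hy by assumption; subst; contradiction.
  - rewrite w_act_comp; apply w_act_ext; intros x Hx; simpl; symmetry.
    apply swap_fun_trans; intros ->; contradiction.
Qed.

(* De Bruijn form in a context [E] of enclosing binders, innermost first: bound
   names become indices and binders forget their name. *)
Fixpoint idx (x : atom) (E : list atom) : option nat :=
  match E with
  | [] => None
  | y :: E' => if Nat.eqb x y then Some 0 else option_map S (idx x E')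
  end.

Inductive dsym := DFree (a : atom) | DBound (i : nat) | DBind.

Fixpoint db (E : list atom) (w : bstr) : list dsym :=
  match w with
  | [] => []
  | Plain a :: w' => match idx a E with Some i => DBound i | None => DFree a end :: db E w'
  | Bind a :: w' => DBind :: db (a :: E) w'
  end.

Definition dsym_act (p : perm) (s : dsym) : dsym :=
  match s with DFree a => DFree (pf p a) | _ => s end.

(* Binds the free names of [D] that occur in [E], for a context [E] lying
   outside [k] binders. *)
Fixpoint close (E : list atom) (k : nat) (D : list dsym) : list dsym :=
  match D with
  | [] => []
  | DFree x :: D' =>
      match idx x E with Some i => DBound (k + i) | None => DFree x end :: close E k D'
  | DBound i :: D' => DBound i :: close E k D'
  | DBind :: D' => DBind :: close E (S k) D'
  end.

Lemma idx_none x E : idx x E = None -> ~ In x E.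
Proof.
  induction E as [|y E IH]; simpl; [tauto|].
  destruct (Nat.eqb_spec x y); [discriminate|].
  destruct (idx x E); simpl; [discriminate|]; intros _ [->|H]; [congruence | exact (IH eq_refl H)].
Qed.

Lemma idx_inj a b E i : idx a E = Some i -> idx b E = Some i -> a = b.
Proof.
  revert i; induction E as [|y E IH]; simpl; intros i; [discriminate|].
  destruct (Nat.eqb_spec a y), (Nat.eqb_spec b y); try congruence;
    destruct (idx a E) eqn:Ea, (idx b E) eqn:Eb; simpl; try congruence.
  intros [= <-] [= Hi]; subst; eauto.
Qed.

Lemma idx_app x F E :
  idx x (F ++ E) =
  match idx x F with Some i => Some i | None => option_map (Nat.add (length F)) (idx x E) end.
Proof.
  induction F as [|y F IH]; simpl; [destruct (idx x E); reflexivity|].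
  destruct (Nat.eqb x y); [reflexivity|].
  rewrite IH; destruct (idx x F), (idx x E); reflexivity.
Qed.

Lemma idx_act p x E : idx (pf p x) (map (pf p) E) = idx x E.
Proof.
  induction E as [|y E IH]; simpl; [reflexivity|].
  destruct (Nat.eqb_spec (pf p x) (pf p y)), (Nat.eqb_spec x y); try congruence.
  apply pf_inj in e; contradiction.
Qed.

Lemma db_length E u : length (db E u) = length u.
Proof. revert E; induction u as [|[a|a] u IH]; intros E; simpl; auto. Qed.

Lemma db_act p E u : db (map (pf p) E) (w_act p u) = map (dsym_act p) (db E u).
Proof.
  revert E; induction u as [|[a|a] u IH]; intros E; simpl; [reflexivity| |].
  - rewrite idx_act, IH; destruct (idx a E); reflexivity.
  - rewrite <- IH; reflexivity.
Qed.

Lemma db_app_env F E u : db (F ++ E) u = close E (length F) (db F u).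
Proof.
  revert F; induction u as [|[a|a] u IH]; intros F; simpl; [reflexivity| |].
  - rewrite idx_app, IH; destruct (idx a F); [reflexivity|]; simpl.
    destruct (idx a E); reflexivity.
  - f_equal; apply (IH (a :: F)).
Qed.

Lemma db_cons_env a E u : db (a :: E) u = close E 1 (db [a] u).
Proof. exact (db_app_env [a] E u). Qed.

Lemma free_db_atoms E u x : In (DFree x) (db E u) -> In x (atoms u).
Proof.
  revert E; induction u as [|[a|a] u IH]; simpl; intros E; [tauto| |].
  - intros [Hx|Hx]; [destruct (idx a E); [discriminate|]; left; congruence | right; eauto].
  - intros [Hx|Hx]; [discriminate | right; eauto].
Qed.

Lemma free_db_not_env E u x : In (DFree x) (db E u) -> ~ In x E.
Proof.
  revert E; induction u as [|[a|a] u IH]; simpl; intros E; [tauto| |].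
  - intros [Hx|Hx]; [|eauto].
    destruct (idx a E) eqn:Ea; [discriminate|]; injection Hx as ->; apply idx_none, Ea.
  - intros [Hx|Hx]; [discriminate|]; intros HxE; apply (IH _ Hx); right; exact HxE.
Qed.

Lemma db_act_bound p a u :
  (forall x, In (DFree x) (db [a] u) -> pf p x = x) -> db [pf p a] (w_act p u) = db [a] u.
Proof.
  intros Hfix; change [pf p a] with (map (pf p) [a]); rewrite db_act.
  transitivity (map id (db [a] u)); [|apply map_id].
  apply map_ext_in; intros [x| |] Hx; [unfold id; simpl; rewrite Hfix by exact Hx|..]; reflexivity.
Qed.

Lemma db_swap_bound a c E u :
  (forall x, In (DFree x) (db [a] u) -> x <> c) ->
  db (c :: E) (w_act (pswap a c) u) = db (a :: E) u.
Proof.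
  intros Hc; rewrite (db_cons_env c E), (db_cons_env a E), <- (@db_act_bound (pswap a c) a u).
  - replace (pf (pswap a c) a) with c by (symmetry; apply swap_fun_l); reflexivity.
  - intros x Hx; simpl; apply swap_fun_other; [|auto].
    intros ->; apply (free_db_not_env _ _ _ Hx); left; reflexivity.
Qed.

Lemma db_swap_fresh a c E u :
  ~ In c (atoms u) -> db (c :: E) (w_act (pswap a c) u) = db (a :: E) u.
Proof.
  intros Hc; apply db_swap_bound; intros x Hx ->; apply Hc, (free_db_atoms _ _ _ Hx).
Qed.

Lemma db_of_abs_bstr a v b w : abs w_act a v = abs w_act b w -> db [a] v = db [b] w.
Proof.
  intros E; apply abs_eq_rel in E; [|exists (atoms v); apply supports_atoms].
  destruct E as (c & Hca & Hcb & Hcv & Hcw & E); apply fresh_bstr in Hcv, Hcw.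
  rewrite <- (@db_swap_fresh a c [] v Hcv), <- (@db_swap_fresh b c [] w Hcw), E; reflexivity.
Qed.

Lemma db_of_alpha E u v : alpha_eq u v -> db E u = db E v.
Proof.
  induction 1 as [u v (x & a & v' & b & w & -> & -> & Habs)| | |]; try congruence.
  apply db_of_abs_bstr in Habs; revert E; induction x as [|[s|s] x IH]; intros E; simpl.
  - rewrite (db_cons_env a E), (db_cons_env b E), Habs; reflexivity.
  - f_equal; apply IH.
  - f_equal; apply IH.
Qed.

Lemma alpha_of_db u : forall v E, db E u = db E v -> alpha_eq u v.
Proof.
  induction u as [u IH] using (induction_ltof1 _ (@length bar)); unfold ltof in IH.
  intros v E Hdb.
  destruct u as [|[a|a] u], v as [|[b|b] v]; simpl in Hdb; try discriminate;
    try (destruct (idx _ _); discriminate).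
  - apply rst_refl.
  - injection Hdb as Hhd Htl.
    assert (a = b) as <-.
    { destruct (idx a E) eqn:Ea, (idx b E) eqn:Eb; try discriminate; injection Hhd;
        intros; subst; [eapply idx_inj; eauto | reflexivity]. }
    apply alpha_eq_cons, (IH u) with E; simpl; auto.
  - injection Hdb as Htl.
    destruct (fresh_atom (atoms u ++ atoms v)) as [c Hc]; split_notin.
    eapply rst_trans; [apply alpha_bind_rename; eassumption|].
    eapply rst_trans; [|apply rst_sym, alpha_bind_rename; eassumption].
    apply alpha_eq_cons, (IH (w_act (pswap a c) u)) with (c :: E).
    + unfold w_act; rewrite length_map; simpl; lia.
    + rewrite !db_swap_fresh; assumption.
Qed.

(** * The final coalgebra of bar languages *)

Lemma db_rep_cls E w : db E (rep (cls alpha_eq w)) = db E w.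
Proof. apply db_of_alpha, rep_cls_rel, rst_refl. Qed.

Lemma cls_eq_of_db u v : db [] u = db [] v -> cls alpha_eq u = cls alpha_eq v.
Proof. intros H; apply cls_eq_of_rel, (alpha_of_db _ _ _ H); apply clos_rst_is_equiv. Qed.

Lemma lang_supports l : supports lang_act (atoms (rep l)) l.
Proof.
  intros p Hp; unfold lang_act; rewrite (supports_atoms (rep l) p Hp).
  symmetry; apply cls_rep.
Qed.

Lemma supp_lang_of_free E l c : In (DFree c) (db E (rep l)) -> supp lang_act l c.
Proof.
  intros Hc; apply (supp_of_swap_moves (E ++ atoms (rep l))); intros d Hd Hdc Hfix.
  split_notin.
  assert (HE : map (pf (pswap c d)) E = E).
  { transitivity (map id E); [|apply map_id].
    apply map_ext_in; intros y Hy; unfold id; simpl.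
    apply swap_fun_other; intros ->; [|contradiction].
    exact (free_db_not_env _ _ _ Hc Hy). }
  assert (Hdb : map (dsym_act (pswap c d)) (db E (rep l)) = db E (rep l)).
  { rewrite <- db_act, HE, <- (db_rep_cls E); unfold lang_act in Hfix; rewrite Hfix; reflexivity. }
  apply H0, (free_db_atoms E _ _); rewrite <- Hdb, in_map_iff.
  exists (DFree c); split; [simpl; rewrite swap_fun_l; reflexivity | exact Hc].
Qed.

Lemma db_lang_swap_fresh a c l :
  fresh lang_act c l -> db [c] (rep (lang_act (pswap a c) l)) = db [a] (rep l).
Proof.
  intros Hc; unfold lang_act; rewrite db_rep_cls.
  apply db_swap_bound; intros x Hx ->; exact (Hc (supp_lang_of_free _ _ _ Hx)).
Qed.

Lemma db_of_abs_lang a l1 b l2 :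
  abs lang_act a l1 = abs lang_act b l2 -> db [a] (rep l1) = db [b] (rep l2).
Proof.
  intros E; apply abs_eq_rel in E; [|eexists; apply lang_supports].
  destruct E as (c & Hca & Hcb & Hc1 & Hc2 & E).
  rewrite <- (db_lang_swap_fresh a c l1 Hc1), <- (db_lang_swap_fresh b c l2 Hc2), E; reflexivity.
Qed.

Lemma iota_pair a w : iota (FPair a (cls alpha_eq w)) = cls alpha_eq (Plain a :: w).
Proof. apply cls_eq_of_db; simpl; rewrite db_rep_cls; reflexivity. Qed.

Lemma iota_abs b w : iota (FAbs (abs lang_act b (cls alpha_eq w))) = cls alpha_eq (Bind b :: w).
Proof.
  simpl; destruct (rep (abs lang_act b (cls alpha_eq w))) as [b' y] eqn:Er.
  apply abs_rep, db_of_abs_lang in Er; rewrite db_rep_cls in Er.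
  apply cls_eq_of_db; simpl; rewrite Er; reflexivity.
Qed.

Lemma iota_iota_inv l : iota (iota_inv l) = l.
Proof.
  unfold iota_inv; destruct (rep l) as [|[a|a] w] eqn:E; rewrite (cls_rep l), E;
    [reflexivity | apply iota_pair | apply iota_abs].
Qed.

Definition lang_length (l : Lang) : nat := length (rep l).

Lemma lang_length_cls w : lang_length (cls alpha_eq w) = length w.
Proof. unfold lang_length; rewrite <- (db_length []), db_rep_cls, db_length; reflexivity. Qed.

Lemma lang_length_iota_pair a y : lang_length (iota (FPair a y)) = S (lang_length y).
Proof. rewrite (cls_rep y), iota_pair, !lang_length_cls; reflexivity. Qed.

Lemma lang_length_iota_abs b y :
  lang_length (iota (FAbs (abs lang_act b y))) = S (lang_length y).
Proof. rewrite (cls_rep y), iota_abs, !lang_length_cls; reflexivity. Qed.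

(** * Supports along the runs of an RNNA *)

Section Rnna.
Variable A : RNNA.

Lemma accepts_act p q w : accepts A q w -> accepts A (st_act A p q) (w_act p w).
Proof.
  revert q; induction w as [|s w IH]; simpl; intros q; [apply final_equiv|].
  intros [q' [Ht Hw]]; exists (st_act A p q'); split; [apply trans_equiv | apply IH]; assumption.
Qed.

Lemma trans_plain_supp_bound q :
  exists M, forall a q', trans A q (Plain a) q' ->
    In a M /\ forall x, supp (st_act A) q' x -> In x M.
Proof.
  destruct (trans_fin_free A q) as [L HL].
  destruct (supp_list_bound (st_nominal A) (map snd L)) as [M HM].
  exists (map fst L ++ M); intros a q' Ht; apply HL in Ht.
  split; [|intros x Hx]; apply in_or_app.
  - left; exact (in_map fst _ _ Ht).
  - right; exact (HM q' (in_map snd _ _ Ht) x Hx).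
Qed.

Lemma trans_bind_supp_bound q :
  exists M, forall a q', trans A q (Bind a) q' ->
    forall x, supp (st_act A) q' x -> x <> a -> In x M.
Proof.
  destruct (trans_fin_bound A q) as [L HL].
  destruct (supp_list_bound (st_nominal A) (map (fun t => snd (rep t)) L)) as [M HM].
  exists M; intros a q' Ht x Hx Hxa; apply HL in Ht.
  destruct (rep (abs (st_act A) a q')) as [b r] eqn:Er.
  apply (HM r).
  - apply in_map_iff; exists (abs (st_act A) a q'); rewrite Er; auto.
  - exact (proj1 (supp_abs_eq (st_nominal A) _ _ _ _ _ (abs_rep _ _ _ Er) Hx Hxa)).
Qed.

(* A swap fixing [q] permutes its finitely many successors, whose supports lie
   in one finite set; so it cannot move a name of a successor to a fresh name. *)
Lemma trans_plain_supp q a q' :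
  trans A q (Plain a) q' ->
  supp (st_act A) q a /\ forall x, supp (st_act A) q' x -> supp (st_act A) q x.
Proof.
  intros Ht; destruct (trans_plain_supp_bound q) as [M HM].
  assert (Hswap : forall x d, st_act A (pswap x d) q = q ->
            In (swap_fun x d a) M /\
            forall y, supp (st_act A) (st_act A (pswap x d) q') y -> In y M).
  { intros x d Hq; apply HM; rewrite <- Hq; exact (trans_equiv A (pswap x d) _ _ _ Ht). }
  split; [|intros x Hx]; apply (supp_of_swap_moves M); intros d Hd Hdx Hq.
  - apply Hd; rewrite <- (swap_fun_l a d); exact (proj1 (Hswap _ _ Hq)).
  - exact (Hd (proj2 (Hswap _ _ Hq) d (supp_swap (st_nominal A) _ _ _ Hx))).
Qed.

Lemma trans_bind_supp q a q' x :
  trans A q (Bind a) q' -> supp (st_act A) q' x -> x <> a -> supp (st_act A) q x.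
Proof.
  intros Ht Hx Hxa; destruct (trans_bind_supp_bound q) as [M HM].
  apply (supp_of_swap_moves (a :: M)); intros d Hd Hdx Hq; split_notin.
  apply H0, (HM a (st_act A (pswap x d) q')).
  - pose proof (trans_equiv A (pswap x d) _ _ _ Ht) as Ht'; simpl in Ht'.
    rewrite swap_fun_other, Hq in Ht' by auto; exact Ht'.
  - exact (supp_swap (st_nominal A) _ _ _ Hx).
  - auto.
Qed.

Lemma supp_of_accepts_free q w E x :
  accepts A q w -> In (DFree x) (db E w) -> supp (st_act A) q x.
Proof.
  revert q E; induction w as [|[a|a] w IH]; simpl; intros q E Hw Hx; [contradiction| |];
    destruct Hw as [q' [Ht Hw]].
  - destruct Hx as [Hx|Hx].
    + destruct (idx a E); [discriminate|]; injection Hx as ->.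
      exact (proj1 (trans_plain_supp _ _ _ Ht)).
    + exact (proj2 (trans_plain_supp _ _ _ Ht) x (IH q' E Hw Hx)).
  - destruct Hx as [Hx|Hx]; [discriminate|].
    apply (trans_bind_supp q a q' x Ht (IH q' (a :: E) Hw Hx)).
    intros ->; apply (free_db_not_env _ _ _ Hx); left; reflexivity.
Qed.

Lemma accepts_abs_rename a q' b q'' w :
  abs (st_act A) a q' = abs (st_act A) b q'' -> accepts A q' w ->
  exists w', accepts A q'' w' /\ length w' = length w /\ db [b] w' = db [a] w.
Proof.
  intros Habs Hw.
  destruct (abs_eq_rel _ _ _ _ (proj2 (proj2 (st_nominal A)) q') Habs)
    as (c & Hca & Hcb & Hcq' & Hcq'' & Hswap).
  set (p := pcomp (pswap b c) (pswap a c)).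
  exists (w_act p w); repeat split.
  - replace q'' with (st_act A p q').
    + apply accepts_act, Hw.
    + destruct (st_nominal A) as [_ [Hcomp _]].
      unfold p; rewrite <- Hcomp, Hswap; apply act_swap_invol, st_nominal.
  - apply length_map.
  - replace b with (pf p a) by (simpl; rewrite swap_fun_l, swap_fun_r; reflexivity).
    apply db_act_bound; intros x Hx.
    pose proof (supp_of_accepts_free _ _ _ _ Hw Hx) as Hsupp.
    assert (Hxa : x <> a) by (intros ->; apply (free_db_not_env _ _ _ Hx); left; reflexivity).
    assert (Hxc : x <> c) by (intros ->; contradiction).
    destruct (supp_abs_eq (st_nominal A) _ _ _ _ _ Habs Hsupp Hxa) as [_ Hxb].
    simpl; rewrite (swap_fun_other a c x), (swap_fun_other b c x) by assumption; reflexivity.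
Qed.

End Rnna.

(** * The Kleisli trace *)

Section Trace.
Variables (A : RNNA) (tr : st A -> Lang -> Prop).
Hypothesis tr_coalg : forall q, kcomp (J iota_inv) tr q = kcomp (Fbar tr) (rnna_coalg A) q.

Lemma tr_unfold q l : tr q l -> exists u, rnna_coalg A q u /\ Fbar tr u (iota_inv l).
Proof.
  intros Hl; change (kcomp (Fbar tr) (rnna_coalg A) q (iota_inv l)).
  rewrite <- tr_coalg; exists l; split; [exact Hl | reflexivity].
Qed.

Lemma tr_fold q z : (exists u, rnna_coalg A q u /\ Fbar tr u z) -> tr q (iota z).
Proof.
  intros Hz; change (kcomp (Fbar tr) (rnna_coalg A) q z) in Hz.
  rewrite <- tr_coalg in Hz; destruct Hz as [y [Hy ->]].
  rewrite iota_iota_inv; exact Hy.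
Qed.

Lemma tr_sub_language q l : tr q l -> bar_language A q l.
Proof.
  revert q; induction l as [l IH] using (induction_ltof1 _ lang_length); unfold ltof in IH.
  intros q Hl; destruct (tr_unfold q l Hl) as [u [Hu Hstep]].
  rewrite <- (iota_iota_inv l) in IH |- *.
  destruct Hu as [[-> Hfin] | [[a [q' [Ht ->]]] | [a [q' [Ht ->]]]]]; simpl in Hstep.
  - rewrite Hstep; exists []; split; [exact Hfin | reflexivity].
  - destruct Hstep as [y [Hy Hl']]; rewrite Hl' in IH |- *.
    destruct (IH y ltac:(rewrite lang_length_iota_pair; lia) q' Hy) as [w [Hw ->]].
    exists (Plain a :: w); split; [exists q'; auto | apply iota_pair].
  - destruct (rep (abs (st_act A) a q')) as [b q''] eqn:Er.
    destruct Hstep as [y [Hy Hl']]; rewrite Hl' in IH |- *.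
    destruct (IH y ltac:(rewrite lang_length_iota_abs; lia) q'' Hy) as [w [Hw ->]].
    exists (Bind b :: w); split; [|apply iota_abs].
    exists q''; split; [exact (trans_alpha A q Ht (abs_rep _ _ _ Er)) | exact Hw].
Qed.

Lemma language_sub_tr q w : accepts A q w -> tr q (cls alpha_eq w).
Proof.
  revert q; induction w as [w IH] using (induction_ltof1 _ (@length bar)); unfold ltof in IH.
  intros q Hw; destruct w as [|[a|a] w]; simpl in Hw.
  - change (tr q (iota FStar)); apply tr_fold.
    exists FStar; split; [left; auto | reflexivity].
  - destruct Hw as [q' [Ht Hw]].
    rewrite <- iota_pair; apply tr_fold; exists (FPair a q').
    split; [right; left; eauto|].
    exists (cls alpha_eq w); split; [apply IH; simpl; auto | reflexivity].
  - destruct Hw as [q' [Ht Hw]].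
    destruct (rep (abs (st_act A) a q')) as [b q''] eqn:Er.
    destruct (accepts_abs_rename A _ _ _ _ _ (abs_rep _ _ _ Er) Hw) as (w' & Hw' & Hlen & Hdb).
    replace (cls alpha_eq (Bind a :: w)) with (cls alpha_eq (Bind b :: w'))
      by (apply cls_eq_of_db; simpl; rewrite Hdb; reflexivity).
    rewrite <- iota_abs; apply tr_fold; exists (FAbs (abs (st_act A) a q')).
    split; [right; right; eauto|]; simpl; rewrite Er.
    exists (cls alpha_eq w'); split; [apply IH; simpl; [lia | exact Hw'] | reflexivity].
Qed.

End Trace.

Theorem theorem3p21 (A : RNNA) (tr : st A -> Lang -> Prop)
  (Htr_kl : kl_morphism (st_act A) lang_act tr)
  (Htr_coalg : forall q, kcomp (J iota_inv) tr q = kcomp (Fbar tr) (rnna_coalg A) q) :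
  forall q : st A, tr q = bar_language A q.
Proof.
  intros q; apply functional_extensionality; intros l; apply propositional_extensionality.
  split.
  - apply (tr_sub_language A tr Htr_coalg).
  - intros [w [Hw ->]]; exact (language_sub_tr A tr Htr_coalg q w Hw).
Qed.
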